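(* Let $X,A^+,G,cost$ and the program $P$ be as in the context. For an interpretation $M$, let $c(M)=\sum_{\vec a\in A^+,\ a\in M} cost(\vec a)$. If $P$ has a stable model, then $\min\{c(M): M \text{ a stable model of } P\}=h^+$. If $P$ has no stable model, then $h^+=\infty$.
   Context: Delete-relaxed planning. Let $X$ be a finite set of atomic propositions, $A^+$ a finite set of actions, $G\subseteq X$ a goal set, and $cost:A^+\to\mathbb{Z}_{\ge 0}$. Each action $\vec a\in A^+$ has a precondition set $pre(\vec a)\subseteq X$ and an add set $add(\vec a)\subseteq X$. There are no delete effects and the initial state is $\emptyset$. A relaxed plan is a finite sequence $\vec a_1,\dots,\vec a_m$ of actions of $A^+$ such that, with $s_0=\emptyset$ and $s_i=s_{i-1}\cup add(\vec a_i)$, we have $pre(\vec a_i)\subseteq s_{i-1}$ for all $i$ and $G\subseteq s_m$. The cost of a relaxed plan is $\sum_i cost(\vec a_i)$. $h^+$ is the minimum cost of a relaxed plan, or $\infty$ if none exists. For every action $\vec a$ there is a propositional atom $a$ (its action atom). Action atoms are pairwise distinct and distinct from the elements of $X$. Logic programs. A normal rule has the form $h\leftarrow b_1,\dots,b_n,\mathtt{not}\,c_1,\dots,\mathtt{not}\,c_m$, and a choice rule has the form $\{h\}\leftarrow b_1,\dots,b_n,\mathtt{not}\,c_1,\dots,\mathtt{not}\,c_m$. The reduct $P^I$ contains: - $h\leftarrow b_1,\dots,b_n$ for each normal rule of $P$ with no $c_j\in I$; - $h\leftarrow b_1,\dots,b_n$ for each choice rule of $P$ with no $c_j\in I$ and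 $h\in I$. $I$ is a stable model of $P$ if $I$ is the least model of $P^I$. Program $P$ consists of: 1. $g\leftarrow\mathtt{not}\,g$ for every $g\in G$; 2. $\{a\}\leftarrow q_1,\dots,q_n$ for every $\vec a\in A^+$ with $pre(\vec a)=\{q_1,\dots,q_n\}$; 3. $p\leftarrow a$ for every $\vec a\in A^+$ and every $p\in add(\vec a)$. *)

From mathcomp Require Import all_boot.
Set Implicit Arguments. Unset Strict Implicit. Unset Printing Implicit Defensive.

Section LP.
Variable T : finType.

(* NormalRule h pos neg :  h <- pos, not neg
   ChoiceRule h pos neg :  {h} <- pos, not neg *)
Inductive rule :=
| NormalRule of T & seq T & seq T
| ChoiceRule of T & seq T & seq T.

Definition drule := (T * seq T)%type.

Definition reduct_rule (I : {set T}) (r : rule) : seq drule :=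
  match r with
  | NormalRule h pos neg =>
      if has (fun c => c \in I) neg then [::] else [:: (h, pos)]
  | ChoiceRule h pos neg =>
      if has (fun c => c \in I) neg || (h \notin I) then [::] else [:: (h, pos)]
  end.

Definition reduct (P : seq rule) (I : {set T}) : seq drule :=
  flatten [seq reduct_rule I r | r <- P].

Definition is_model (D : seq drule) (M : {set T}) : Prop :=
  forall r, r \in D -> all (fun b => b \in M) r.2 -> r.1 \in M.

Definition least_model (D : seq drule) (M : {set T}) : Prop :=
  is_model D M /\ forall M', is_model D M' -> M \subset M'.

Definition stable_model (P : seq rule) (I : {set T}) : Prop :=
  least_model (reduct P I) I.
End LP.

Section Planning.
Variables (X A : finType).
Variables (pre add : A -> {set X}) (G : {set X}) (cost : A -> nat).

Fixpoint final_state (s : {set X}) (pi : seq A) : {set X} :=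
  if pi is a :: pi' then final_state (s :|: add a) pi' else s.

Fixpoint executable (s : {set X}) (pi : seq A) : bool :=
  if pi is a :: pi' then (pre a \subset s) && executable (s :|: add a) pi'
  else true.

Definition relaxed_plan (pi : seq A) : bool :=
  executable set0 pi && (G \subset final_state set0 pi).

Definition plan_cost (pi : seq A) : nat := \sum_(a <- pi) cost a.

(* h^+ as an extended natural: None = infinity, Some n = min cost n *)
Definition hplus_is (v : option nat) : Prop :=
  match v with
  | None => forall pi, ~~ relaxed_plan pi
  | Some n => (exists pi, relaxed_plan pi /\ plan_cost pi = n) /\
              (forall pi, relaxed_plan pi -> n <= plan_cost pi)
  end.

(* atoms: elements of X (inl) and action atoms (inr); disjoint by construction *)
Definition atom := (X + A)%type.

Definition program : seq (rule atom) :=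
  [seq NormalRule (inl g) [::] [:: inl g] | g <- enum G] ++
  [seq ChoiceRule (inr a) [seq inl q | q <- enum (pre a)] [::] | a <- enum A] ++
  flatten [seq [seq NormalRule (inl p) [:: inr a] [::] | p <- enum (add a)]
          | a <- enum A].

Definition interp_cost (M : {set atom}) : nat :=
  \sum_(a : A | inr a \in M) cost a.
End Planning.

From mathcomp Require Import all_boot.
From Stdlib Require Import Classical.

(* Every relaxed plan induces a stable model of the program that is no
   more expensive, and every stable model is induced by a duplicate-free
   relaxed plan of exactly its cost; hence the minimal cost of a stable
   model is h^+, and there is no stable model iff there is no plan.

   The reduct of the program w.r.t. a candidate M consists of the facts
   g <- (g a goal outside M), the rules a <- pre(a) for the action atoms in
   M, and all rules p <- a for p in add(a); so M' is a model of it iff M'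
   satisfies three closure conditions ([reduct_closed], [reduct_modelP]).
   - From a relaxed plan pi we build [plan_atoms pi] (the state reached by
     pi, plus the actions of pi); it is a stable model ([plan_stable]) of
     cost at most the cost of pi ([plan_atoms_cost]).
   - From a stable model M we greedily build a duplicate-free executable
     plan using exactly the actions of M; leastness of M forces it to be a
     relaxed plan of cost c(M) ([stable_plan]). *)

Lemma ex_minimizer {T : Type} {P : T -> Prop} (f : T -> nat) :
  (exists x, P x) -> exists2 x, P x & forall y, P y -> f x <= f y.
Proof.
case=> x Px; suff: forall n x, P x -> f x <= n ->
  exists2 x, P x & forall y, P y -> f x <= f y by apply; [exact: Px | exact: leqnn].
elim=> [|n IH] {}x {}Px fx.
  by exists x => // y _; apply: leq_trans fx _.
case: (classic (exists2 y, P y & f y < f x)) => [[y Py fy] | no].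
  by apply: (IH y Py); rewrite -ltnS (leq_trans fy).
exists x => // y Py; rewrite leqNgt; apply/negP => fy.
by apply: no; exists y.
Qed.

Lemma sum_mem_le (I : finType) (s : seq I) (F : I -> nat) :
  \sum_(i | i \in s) F i <= \sum_(i <- s) F i.
Proof.
rewrite -(eq_bigl _ _ (mem_undup s)) -big_uniq ?undup_uniq //.
by apply: (sub_le_big_seq leqnn (fun m n => leq_addr n m)) => i; apply: count_undup.
Qed.

Section RelaxedPlanning.
Set Implicit Arguments.
Unset Strict Implicit.
Variables (X A : finType) (pre add : A -> {set X}) (G : {set X}).
Variable cost : A -> nat.
Local Notation prog := (program pre add G).
Local Notation atm := (atom X A).
Local Notation reached s pi := (final_state add s pi).

Definition props (M : {set atm}) : {set X} := [set x | inl x \in M].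

(* The three closure conditions expressing that M' is a model of the
   reduct of the program with respect to M. *)
Definition reduct_closed (M M' : {set atm}) : Prop :=
  [/\ forall g, g \in G -> inl g \notin M -> inl g \in M',
      forall a, inr a \in M -> pre a \subset props M' -> inr a \in M'
    & forall a p, p \in add a -> inr a \in M' -> inl p \in M'].

Lemma reduct_program (M : {set atm}) : reduct prog M =
  flatten [seq reduct_rule M (NormalRule (inl g : atm) [::] [:: inl g])
          | g <- enum G] ++
  flatten [seq reduct_rule M
            (ChoiceRule (inr a : atm) [seq inl q | q <- enum (pre a)] [::])
          | a <- enum A] ++
  flatten [seq flatten [seq reduct_rule M (NormalRule (inl p : atm) [:: inr a] [::])
                       | p <- enum (add a)] | a <- enum A].
Proof.
rewrite /reduct /program !map_cat !flatten_cat -!map_comp.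
congr (_ ++ (_ ++ _)).
by elim: (Finite.enum A) => //= a l IH; rewrite map_cat flatten_cat -map_comp IH.
Qed.

Lemma mem_reductP (M : {set atm}) (r : drule atm) :
  r \in reduct prog M <->
  [\/ exists2 g, g \in G /\ inl g \notin M & r = (inl g, [::]),
      exists2 a, inr a \in M & r = (inr a, [seq inl q | q <- enum (pre a)])
    | exists a p, p \in add a /\ r = (inl p, [:: inr a])].
Proof.
rewrite reduct_program !mem_cat; split.
- case/or3P => /flatten_mapP [a]; rewrite ?mem_enum /=.
  + move=> aG; case: ifP => //= /negbT; rewrite orbF => aM.
    by rewrite inE => /eqP ->; apply: Or31; exists a.
  + move=> _; case: ifP => //= /negbT; rewrite negbK => aM.
    by rewrite inE => /eqP ->; apply: Or32; exists a.
  + move=> _ /flatten_mapP [p]; rewrite mem_enum /= inE => pa /eqP ->.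
    by apply: Or33; exists a, p.
- case=> [[g [gG gM] ->] | [a aM ->] | [a [p [pa ->]]]]; apply/or3P.
  + by apply: Or31; apply/flatten_mapP; exists g; rewrite ?mem_enum //= (negbTE gM) inE.
  + by apply: Or32; apply/flatten_mapP; exists a; rewrite ?mem_enum //= aM inE.
  + apply: Or33; apply/flatten_mapP; exists a; rewrite ?mem_enum //.
    by apply/flatten_mapP; exists p; rewrite ?mem_enum //= inE.
Qed.

Lemma reduct_modelP (M M' : {set atm}) :
  is_model (reduct prog M) M' <-> reduct_closed M M'.
Proof.
split=> [H | [H1 H2 H3] r /mem_reductP].
- split.
  + by move=> g gG gM; apply: (H (inl g, [::]) _ isT); apply/mem_reductP; apply: Or31; exists g.
  + move=> a aM preM; apply: (H (inr a, _)); first by apply/mem_reductP; apply: Or32; exists a.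
    rewrite /= all_map; apply/allP => q; rewrite mem_enum /= => qa.
    by have := subsetP preM q qa; rewrite inE.
  + move=> a p pa aM; apply: (H (inl p, [:: inr a])); last by rewrite /= aM.
    by apply/mem_reductP; apply: Or33; exists a, p.
- case=> [[g [gG gM] ->] | [a aM ->] | [a [p [pa ->]]]] /=.
  + by move=> _; apply: H1.
  + rewrite all_map => /allP preM; apply: H2 => //; apply/subsetP => q qa.
    by rewrite inE; apply: preM; rewrite mem_enum.
  + by rewrite andbT; apply: H3.
Qed.

(* Every goal lies in a stable model M: the reduct contains the fact g
   whenever g is a goal outside M. *)
Lemma stable_goals (M : {set atm}) : stable_model prog M ->
  forall g, g \in G -> inl g \in M.
Proof.
case=> /reduct_modelP [H1 _ _] _ g gG.
by apply: contraT => gM; have := H1 g gG gM; rewrite (negbTE gM).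
Qed.

Lemma reached_sub (s : {set X}) (pi : seq A) : s \subset reached s pi.
Proof.
elim: pi s => [|a pi IH] s /=; first exact: subxx.
exact: subset_trans (subsetUl _ _) (IH _).
Qed.

Lemma reached_add (s : {set X}) (pi : seq A) (a : A) :
  a \in pi -> add a \subset reached s pi.
Proof.
elim: pi s => //= b pi IH s; rewrite inE => /predU1P [-> | api]; last exact: IH.
exact: subset_trans (subsetUr _ _) (reached_sub _ _).
Qed.

Lemma executable_rcons (s : {set X}) (pi : seq A) (a : A) :
  executable pre add s (rcons pi a) =
  executable pre add s pi && (pre a \subset reached s pi).
Proof. by elim: pi s => [|b pi IH] s /=; rewrite ?andbT // IH andbA. Qed.

Lemma executable_closed (M' : {set atm}) (pi : seq A) (s : {set X}) :
  executable pre add s pi -> s \subset props M' ->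
  (forall a, a \in pi -> pre a \subset props M' -> inr a \in M') ->
  (forall a p, p \in add a -> inr a \in M' -> inl p \in M') ->
  reached s pi \subset props M' /\ {in pi, forall a, inr a \in M'}.
Proof.
move=> + + + addM; elim: pi s => [|a pi IH] s //= /andP [prea ex] sM actM.
have aM : inr a \in M' by apply: actM; [exact: mem_head | exact: subset_trans sM].
have [reachM piM] : reached (s :|: add a) pi \subset props M' /\ {in pi, forall b, inr b \in M'}.
  apply: IH => //; last by move=> b bpi; apply: actM; rewrite inE bpi orbT.
  by rewrite subUset sM; apply/subsetP => p pa; rewrite inE; apply: addM aM.
by split=> // b; rewrite inE => /predU1P [-> | /piM].
Qed.

Definition plan_atoms (pi : seq A) : {set atm} :=
  [set x : atm | match x with
                 | inl p => p \in reached set0 pi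
                 | inr a => a \in pi end].

Lemma props_plan_atoms (pi : seq A) : props (plan_atoms pi) = reached set0 pi.
Proof. by apply/setP => x; rewrite !inE. Qed.

Lemma plan_atoms_add (pi : seq A) (a : A) (p : X) :
  p \in add a -> inr a \in plan_atoms pi -> inl p \in plan_atoms pi.
Proof. by rewrite !inE => pa api; apply: subsetP (reached_add _ api) _ pa. Qed.

(* Any model of the reduct w.r.t. the atoms of an executable plan contains
   these atoms: its closure conditions replay the plan step by step. *)
Lemma plan_atoms_least (pi : seq A) (M' : {set atm}) :
  executable pre add set0 pi -> reduct_closed (plan_atoms pi) M' ->
  plan_atoms pi \subset M'.
Proof.
move=> ex [_ actM addM].
have [reachM piM] : reached set0 pi \subset props M' /\ {in pi, forall a, inr a \in M'}.
  by apply: executable_closed => // [|a api]; [exact: sub0set | apply: actM; rewrite inE].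
apply/subsetP => -[x | a]; rewrite inE //=; last exact: piM.
by move/(subsetP reachM); rewrite inE.
Qed.

Lemma plan_stable (pi : seq A) : relaxed_plan pre add G pi -> stable_model prog (plan_atoms pi).
Proof.
case/andP=> ex goals; split; last by move=> M' /reduct_modelP; apply: plan_atoms_least.
apply/reduct_modelP; split=> [g gG _ | // | a p]; last exact: plan_atoms_add.
by rewrite inE; apply: subsetP goals g gG.
Qed.

(* The actions of a plan cost at most the plan, which may repeat some. *)
Lemma plan_atoms_cost (pi : seq A) : interp_cost cost (plan_atoms pi) <= plan_cost cost pi.
Proof.
rewrite /interp_cost (eq_bigl (fun a => a \in pi)); first exact: sum_mem_le.
by move=> a; rewrite inE.
Qed.

Lemma saturated_plan (S : {set A}) : exists pi : seq A,
  [/\ executable pre add set0 pi, {subset pi <= S}, uniq pi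
    & forall a, a \in S -> pre a \subset reached set0 pi -> a \in pi].
Proof.
suff grow : forall n (pi : seq A), executable pre add set0 pi -> {subset pi <= S} ->
    uniq pi -> #|[set a in S | a \notin pi]| <= n -> exists pi' : seq A,
  [/\ executable pre add set0 pi', {subset pi' <= S}, uniq pi'
    & forall a, a \in S -> pre a \subset reached set0 pi' -> a \in pi'].
  by apply: (grow #|A| [::]) => //; exact: max_card.
elim=> [|n IH] pi ex piS upi.
  rewrite leqn0 cards_eq0 => /eqP /setP left0; exists pi; split=> // a aS _.
  by apply: contraT => api; have := left0 a; rewrite !inE aS api.
move=> left_n.
case: (pickP [pred a | [&& a \in S, a \notin pi & pre a \subset reached set0 pi]])
  => [a /and3P [aS api prea] | none]; last first.
  exists pi; split=> // a aS prea; apply: contraT => api.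
  by have := none a; rewrite /= aS api prea.
apply: (IH (rcons pi a)).
- by rewrite executable_rcons ex prea.
- by move=> b; rewrite mem_rcons inE => /predU1P [-> | /piS].
- by rewrite rcons_uniq api upi.
- rewrite -ltnS; apply: leq_trans left_n; apply: proper_card; apply/properP; split.
    by apply/subsetP => b; rewrite !inE mem_rcons inE negb_or => /andP [-> /andP [_ ->]].
  by exists a; rewrite !inE ?aS ?api // mem_rcons mem_head.
Qed.

(* A stable model yields a relaxed plan of the same cost: saturate the
   actions of M; by leastness M lies below the atoms of that plan. *)
Lemma stable_plan (M : {set atm}) : stable_model prog M ->
  exists2 pi, relaxed_plan pre add G pi & plan_cost cost pi = interp_cost cost M.
Proof.
move=> st; have goals := stable_goals st; case: st => _ least.
have [pi [ex piS upi sat]] := saturated_plan [set a | inr a \in M].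
have M_sub : M \subset plan_atoms pi.
  apply: least; apply/reduct_modelP; split=> [g gG | a aM | a p].
  - by rewrite goals.
  - by rewrite props_plan_atoms inE => prea; apply: sat; rewrite ?inE.
  - exact: plan_atoms_add.
have piM a : (a \in pi) = (inr a \in M).
  apply/idP/idP => [/piS | /(subsetP M_sub)]; by rewrite inE.
exists pi; last by rewrite /plan_cost big_uniq //; apply: eq_bigl => a; rewrite piM.
rewrite /relaxed_plan ex -props_plan_atoms; apply/subsetP => g gG.
by rewrite inE (subsetP M_sub) ?goals.
Qed.

End RelaxedPlanning.

Theorem mainTheorem2 (X A : finType) (pre add : A -> {set X}) (G : {set X})
    (cost : A -> nat) :
  ((exists M, stable_model (program pre add G) M) ->
     exists M0, [/\ stable_model (program pre add G) M0,
                    (forall M, stable_model (program pre add G) M ->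
                       interp_cost cost M0 <= interp_cost cost M)
                  & hplus_is pre add G cost (Some (interp_cost cost M0))]) /\
  ((~ exists M, stable_model (program pre add G) M) ->
     hplus_is pre add G cost None).
Proof.
split=> [exM | noM pi].
- have [M0 st0 min0] := ex_minimizer (interp_cost cost) exM.
  exists M0; split=> //; split.
    by have [pi rp eq_cost] := stable_plan cost st0; exists pi.
  move=> pi rp; exact: leq_trans (min0 _ (plan_stable rp)) (plan_atoms_cost add cost pi).
- by apply/negP => rp; apply: noM; exists (plan_atoms add pi); apply: plan_stable.
Qed.
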